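(* Let $(\mathcal{O},g,f)$ be an oriented matroid program and let $\mathcal{O}'=\mathcal{O}\cup p$ be a nontrivial single-element extension of $\mathcal{O}$. Let $X,Y$ be old, conformal, comodular cocircuits of $\mathcal{O}'$ with $X_g=Y_g=+$. Then $X\setminus p$ and $Y\setminus p$ are conformal cocircuits of $\mathcal{O}$ with $(X\setminus p)_g=(Y\setminus p)_g=+$. Moreover, $X\setminus p$ and $Y\setminus p$ are comodular in $\mathcal{O}$ if $(X\circ Y)_p\neq 0$ or if $\mathcal{O}\cup p$ is a principal extension.
   Context: Oriented matroid $\mathcal{O}$ of rank $r$ on finite $E$, given by its cocircuits (sign vectors in $\{+,-,0\}^E$), underlying matroid $\mathcal{M}(\mathcal{O})$. Notation: $z(X)$ zero set, $\operatorname{sep}(X,Y)=\{e:X_e=-Y_e\ne0\}$, $(X\circ Y)_e=X_e$ if $X_e\ne0$, else $Y_e$; conformal means $\operatorname{sep}=\emptyset$. An edge is a covector whose zero set is a flat of rank $r-2$; cocircuits $X\ne\pm Y$ are comodular if $X\circ Y$ is an edge. An oriented matroid program $(\mathcal{O},g,f)$: $g\neq f\in E$, $g$ not a loop, $f$ not a coloop. A single-element extension $\mathcal{O}'=\mathcal{O}\cup p$ is determined by a localization $\sigma$ from cocircuits of $\mathcal{O}$ to $\{+,-,0\}$; its cocircuits are the old cocircuits $(Y,\sigma(Y))$, $Y$ a cocircuit of $\mathcal{O}$, and the new cocircuits $(Y^1\circ Y^2,0)$ with $Y^1,Y^2$ conformal comodular cocircuits of $\mathcal{O}$ with $\sigma(Y^1)=-\sigma(Y^2)\ne0$.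 $X\setminus p$ denotes restriction to $E$. The extension is nontrivial if $p$ is not a coloop. It is principal if there is a flat $A$ of $\mathcal{M}(\mathcal{O})$ such that for every flat $F$ of $\mathcal{M}(\mathcal{O})$, $p\in\operatorname{cl}_{\mathcal{M}(\mathcal{O}')}(F)$ iff $A\subseteq F$. *)

From mathcomp Require Import all_boot.
Set Implicit Arguments. Unset Strict Implicit. Unset Printing Implicit Defensive.

(* Signs: None = 0, Some true = +, Some false = - *)
Notation sgn := (option bool).
Definition sv (E : finType) := {ffun E -> sgn}.

Section SV.
Variable E : finType.
Implicit Types (X Y Z : sv E) (A F I : {set E}).

Definition sv0 : sv E := [ffun=> None].
Definition svopp X : sv E := [ffun e => omap negb (X e)].
Definition svcomp X Y : sv E := [ffun e => if X e is Some _ then X e else Y e].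
Definition zeroset X : {set E} := [set e | X e == None].
Definition supp X : {set E} := [set e | X e != None].
Definition pos X : {set E} := [set e | X e == Some true].
Definition negs X : {set E} := [set e | X e == Some false].
Definition sep X Y : {set E} :=
  [set e | (X e != None) && (X e == omap negb (Y e))].
Definition conformal X Y := sep X Y = set0.

Definition is_OM (C : {set sv E}) : Prop :=
  [/\ sv0 \notin C,
      (forall X, X \in C -> svopp X \in C),
      (forall X Y, X \in C -> Y \in C -> supp X \subset supp Y ->
          X = Y \/ X = svopp Y) &
      (forall X Y e, X \in C -> Y \in C -> X <> svopp Y -> e \in sep X Y ->
          exists2 Z, Z \in C &
            [/\ Z e = None, pos Z \subset pos X :|: pos Y &
                negs Z \subset negs X :|: negs Y])].

Definition covector (C : {set sv E}) V :=
  exists2 s : seq (sv E), all (mem C) s & V = foldr svcomp sv0 s.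

(* underlying matroid M(O): hyperplanes are zero sets of cocircuits;
   closure = intersection of all hyperplanes containing A (E if none) *)
Definition cl (C : {set sv E}) A : {set E} :=
  [set e | [forall X in C, (A \subset zeroset X) ==> (e \in zeroset X)]].
Definition flat (C : {set sv E}) F := cl C F = F.
Definition indep (C : {set sv E}) I := [forall e in I, e \notin cl C (I :\ e)].
Definition rank (C : {set sv E}) A : nat :=
  \max_(I : {set E} | (I \subset A) && indep C I) #|I|.
Definition OMrank (C : {set sv E}) := rank C setT.

Definition edge (C : {set sv E}) V :=
  [/\ covector C V, flat C (zeroset V) & rank C (zeroset V) + 2 = OMrank C].
Definition comodular (C : {set sv E}) X Y :=
  [/\ X \in C, Y \in C, X <> Y, X <> svopp Y & edge C (svcomp X Y)].

Definition loop (C : {set sv E}) e := forall X, X \in C -> X e = None.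
Definition coloop (C : {set sv E}) e := exists2 X, X \in C & supp X = [set e].

Definition program (C : {set sv E}) (g f : E) :=
  [/\ is_OM C, g <> f, ~ loop C g & ~ coloop C f].
End SV.

Section Ext.
Variable E : finType.
(* the new element p is None : option E; old elements are Some e *)
Definition res (X : sv (option E)) : sv E := [ffun e => X (Some e)].

Definition deletion (C' : {set sv (option E)}) : {set sv E} :=
  [set Z | [&& Z != sv0 E, [exists X in C', res X == Z] &
     [forall X in C', (res X != sv0 E) ==> (supp (res X) \subset supp Z) ==>
                       (supp Z \subset supp (res X))]]].

Definition single_ext (C : {set sv E}) (C' : {set sv (option E)}) :=
  is_OM C' /\ deletion C' = C.
Definition nontrivial_ext (C' : {set sv (option E)}) := ~ coloop C' None.
Definition old_cocircuit (C : {set sv E}) (C' : {set sv (option E)}) X :=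
  X \in C' /\ res X \in C.
Definition principal_ext (C : {set sv E}) (C' : {set sv (option E)}) :=
  exists2 A : {set E}, flat C A &
    forall F : {set E}, flat C F -> (None \in cl C' (Some @: F) <-> A \subset F).
End Ext.

From mathcomp Require Import all_boot.
Set Implicit Arguments. Unset Strict Implicit. Unset Printing Implicit Defensive.

(* The first four claims are immediate; the content is the comodularity of
   X\p and Y\p.  They are distinct (a cocircuit of O' vanishing at p is
   determined by its restriction, and conformality settles the other case) and
   not opposite (both are + at g).  Their composition is a covector whose zero
   set is the intersection of two hyperplanes, hence a flat.  For its rank,
   note that O = O' \ p, so ranks in O are ranks in O' of the same sets, and
   nontriviality puts p in the closure of E, so both have the same rank.  The
   zero set of X o Y in O' is that of X\p o Y\p, plus p exactly when
   (X o Y)_p = 0.  In that case X_p = Y_p = 0, so p lies in the closure of both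
   hyperplanes z(X\p) and z(Y\p); for a principal extension with flat A this
   gives A inside both, hence p in the closure of their intersection, and
   adding a point of its closure to a set does not change the rank. *)

Section SignVectors.
Variable T : finType.
Implicit Types (X Y Z : sv T).

Lemma in_zeroset X e : (e \in zeroset X) = (e \notin supp X).
Proof. by rewrite !inE negbK. Qed.

Lemma supp_svopp X : supp (svopp X) = supp X.
Proof. by apply/setP => e; rewrite !inE ffunE; case: (X e). Qed.

Lemma zeroset_svcomp X Y : zeroset (svcomp X Y) = zeroset X :&: zeroset Y.
Proof. by apply/setP => e; rewrite !inE ffunE; case: (X e). Qed.

Lemma svcomp_sv0 X : svcomp X (sv0 T) = X.
Proof. by apply/ffunP => e; rewrite !ffunE; case: (X e). Qed.

Lemma supp_neq0 X : X != sv0 T -> supp X != set0.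
Proof.
move=> nzX; apply/eqP => supp0; move/eqP: nzX; apply; apply/ffunP => e.
have : e \notin supp X by rewrite supp0 inE.
by rewrite !ffunE inE negbK => /eqP.
Qed.

Lemma supp_sub_signs X Y Z : pos Z \subset pos X :|: pos Y ->
  negs Z \subset negs X :|: negs Y -> supp Z \subset supp X :|: supp Y.
Proof.
move=> sub_pos sub_neg; apply/subsetP => e; rewrite inE.
case Ze: (Z e) => [[]|] // _.
- have : e \in pos Z by rewrite inE Ze.
  by move/(subsetP sub_pos); rewrite !inE => /orP[/eqP->|/eqP->]; rewrite ?orbT.
- have : e \in negs Z by rewrite inE Ze.
  by move/(subsetP sub_neg); rewrite !inE => /orP[/eqP->|/eqP->]; rewrite ?orbT.
Qed.

End SignVectors.

Section Closure.
Variables (T : finType) (C : {set sv T}).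
Implicit Types (X Y Z : sv T) (A B I J : {set T}).

Lemma clP A e :
  reflect (forall X, X \in C -> A \subset zeroset X -> e \in zeroset X)
          (e \in cl C A).
Proof.
rewrite inE; apply: (iffP forallP) => H X.
- by move=> CX sA; move: (H X); rewrite CX sA.
- by apply/implyP => CX; apply/implyP; exact: H.
Qed.

Lemma subset_cl A : A \subset cl C A.
Proof. by apply/subsetP => e Ae; apply/clP => X _ /subsetP; apply. Qed.

Lemma cl_subset A B : A \subset cl C B -> cl C A \subset cl C B.
Proof.
move=> sAB; apply/subsetP => e /clP eA; apply/clP => X CX sB; apply: eA => //.
by apply/subsetP => x /(subsetP sAB) /clP; apply.
Qed.

Lemma cl_mono A B : A \subset B -> cl C A \subset cl C B.
Proof. by move=> sAB; apply: cl_subset; apply: subset_trans sAB (subset_cl _). Qed.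

Lemma flat_zerosetI X Y : X \in C -> Y \in C -> flat C (zeroset X :&: zeroset Y).
Proof.
move=> CX CY; apply/eqP; rewrite eqEsubset subset_cl andbT.
apply/subsetP => e /clP e_cl; rewrite inE.
by rewrite (e_cl X) ?(e_cl Y) ?subsetIl ?subsetIr.
Qed.

Lemma indepP I : reflect (forall e, e \in I -> e \notin cl C (I :\ e)) (indep C I).
Proof.
apply: (iffP forallP) => H e; last by apply/implyP; exact: H.
by move=> Ie; move: (H e); rewrite Ie.
Qed.

Lemma indep_subset I J : indep C I -> J \subset I -> indep C J.
Proof.
move=> /indepP indI sJI; apply/indepP => e Je; apply: contra (indI e (subsetP sJI e Je)).
exact: (subsetP (cl_mono (setSD _ sJI))).
Qed.

Lemma indep_card_le_rank A I : I \subset A -> indep C I -> #|I| <= rank C A.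
Proof. by move=> sIA indI; rewrite /rank (leq_bigmax_cond I) // sIA indI. Qed.

Lemma rank_mono A B : A \subset B -> rank C A <= rank C B.
Proof.
move=> sAB; apply/bigmax_leqP => I /andP[sIA indI].
exact: indep_card_le_rank (subset_trans sIA sAB) indI.
Qed.

End Closure.

Section Elimination.
Variables (T : finType) (C : {set sv T}).
Hypothesis C_OM : is_OM C.
Implicit Types (X Y Z : sv T) (A S I : {set T}).

Lemma cocircuit_supp_eq X Y : X \in C -> Y \in C ->
  supp X \subset supp Y -> supp X = supp Y.
Proof.
case: C_OM => _ _ incomparable _ CX CY sXY.
by case: (incomparable _ _ CX CY sXY) => ->; rewrite ?supp_svopp.
Qed.

(* Choose the sign of the second cocircuit so that [e] is a separating element. *)
Lemma weak_elimination X1 X2 e : X1 \in C -> X2 \in C -> supp X1 != supp X2 ->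
  e \in supp X1 -> e \in supp X2 ->
  exists2 X3, X3 \in C & (e \notin supp X3) && (supp X3 \subset supp X1 :|: supp X2).
Proof.
have [_ C_opp _ elim] := C_OM; move=> C1 C2 neq12 e1 e2.
suff elim_sep Y : Y \in C -> supp Y = supp X2 -> e \in sep X1 Y ->
    exists2 X3, X3 \in C & (e \notin supp X3) && (supp X3 \subset supp X1 :|: supp X2).
  move: e1 e2; rewrite !inE; case X1e: (X1 e) => [b1|] // _.
  case X2e: (X2 e) => [b2|] // _.
  have [b12|b12] := eqVneq b1 (~~ b2).
    by apply: (elim_sep X2) => //; rewrite inE X1e X2e b12 /=.
  apply: (elim_sep (svopp X2)); rewrite ?C_opp ?supp_svopp //.
  by rewrite inE !ffunE X1e X2e /=; move: b12; clear; case: b1; case: b2.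
move=> CY sYX2 sepY.
have not_opp : X1 <> svopp Y.
  by move=> X1Y; move: neq12; rewrite X1Y supp_svopp sYX2 eqxx.
have [Z CZ [Ze sub_pos sub_neg]] := elim _ _ _ C1 CY not_opp sepY.
by exists Z => //; rewrite inE Ze eqxx -sYX2 (supp_sub_signs sub_pos sub_neg).
Qed.

Lemma strong_elimination X1 X2 f e : X1 \in C -> X2 \in C ->
  f \in supp X1 -> f \in supp X2 -> e \in supp X1 -> e \notin supp X2 ->
  exists2 X3, X3 \in C &
    [/\ f \notin supp X3, e \in supp X3 & supp X3 \subset supp X1 :|: supp X2].
Proof.
have [n] := ubnP #|supp X1 :|: supp X2|.
elim: n X1 X2 f e => // n IH X1 X2 f e size12 C1 C2 f1 f2 e1 e2.
have neq12 : supp X1 != supp X2 by apply: contraNneq e2 => <-.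
have [X3 C3 /andP[f3 s3]] := weak_elimination C1 C2 neq12 f1 f2.
have [e3|e3] := boolP (e \in supp X3); first by exists X3.
have /subsetPn[g g3 g1] : ~~ (supp X3 \subset supp X1).
  by apply: contra f3 => /(cocircuit_supp_eq C3 C1) ->.
have g2 : g \in supp X2 by move: (subsetP s3 g g3); rewrite inE (negbTE g1).
have smaller (U : {set T}) : U \proper supp X1 :|: supp X2 -> #|U| < n.
  by move=> /proper_card ltU; rewrite -ltnS (leq_trans _ size12) ?ltnS.
have [X4 C4 [g4 f4 s4]] : exists2 X4, X4 \in C &
    [/\ g \notin supp X4, f \in supp X4 & supp X4 \subset supp X2 :|: supp X3].
  apply: (IH X2 X3 g f _ C2 C3 g2 g3 f2 f3); apply: smaller; apply/properP; split.
    by rewrite subUset subsetUr.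
  exists e; first by rewrite inE e1.
  by rewrite inE negb_or e2.
have s14 : supp X1 :|: supp X4 \subset supp X1 :|: supp X2.
  by rewrite subUset subsetUl (subset_trans s4) // subUset subsetUr.
have e4 : e \notin supp X4.
  by apply: contra e3 => /(subsetP s4); rewrite inE (negbTE e2).
have size14 : #|supp X1 :|: supp X4| < n.
  apply: smaller; apply/properP; split => //; exists g; first by rewrite inE g2 orbT.
  by rewrite inE negb_or g4 g1.
have [X5 C5 [f5 e5 s5]] := IH X1 X4 f e size14 C1 C4 f1 f4 e1 e4.
by exists X5 => //; split => //; apply: subset_trans s5 s14.
Qed.

Lemma cl_exchange S a j : j \in cl C (a |: S) -> j \notin cl C S -> a \in cl C (j |: S).
Proof.
move=> /clP j_cl; rewrite inE => /forallPn[X2]; rewrite !negb_imply.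
case/and3P=> C2 sS2; rewrite in_zeroset negbK => j2.
have zero_on_aS X : X \in C -> S \subset zeroset X -> a \notin supp X ->
    j \in zeroset X.
  by move=> CX sSX aX; apply: j_cl; rewrite // subUset sub1set in_zeroset aX.
apply/clP => X1 C1; rewrite subUset sub1set in_zeroset => /andP[j1 sS1].
rewrite in_zeroset; apply/negP => a1.
have a2 : a \in supp X2.
  by apply: contraLR j2 => a2; rewrite -in_zeroset; exact: zero_on_aS.
have [X3 C3 [a3 j3 s3]] := strong_elimination C2 C1 a2 a1 j2 j1.
suff : j \in zeroset X3 by rewrite in_zeroset j3.
apply: zero_on_aS => //; apply/subsetP => x Sx; rewrite in_zeroset.
move: (subsetP sS2 x Sx) (subsetP sS1 x Sx); rewrite !in_zeroset => x2 x1.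
by apply/negP => /(subsetP s3); rewrite inE (negbTE x1) (negbTE x2).
Qed.

Lemma indep_setU1 I a : indep C I -> a \notin cl C I -> indep C (a |: I).
Proof.
move=> /indepP indI a_cl; have aI : a \notin I by apply: contra a_cl; exact/subsetP/subset_cl.
apply/indepP => x; rewrite in_setU1 => /predU1P[->|Ix]; first by rewrite setU1K.
have xa : x != a by apply: contraNneq aI => <-.
have -> : (a |: I) :\ x = a |: (I :\ x).
  by apply/setP => y; rewrite !inE; case: (eqVneq y a) => //= ->; rewrite [a == x]eq_sym xa.
apply: contra a_cl => x_cl.
by move: (cl_exchange x_cl (indI x Ix)); rewrite setD1K.
Qed.

Lemma rank_setU1_cl A p : p \in cl C A -> rank C (p |: A) = rank C A.
Proof.
move=> pA; apply/eqP; rewrite eqn_leq [X in _ && X]rank_mono ?subsetUr // andbT.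
apply/bigmax_leqP => I /andP[sIpA indI].
have [pI|pI] := boolP (p \in I); last first.
  apply: indep_card_le_rank indI; apply/subsetP => x Ix.
  by move: (subsetP sIpA x Ix); rewrite in_setU1 => /predU1P[xp|//]; rewrite -xp Ix in pI.
have p_cl : p \notin cl C (I :\ p) by move/indepP: indI => /(_ p pI).
have /subsetPn[a Aa a_cl] : ~~ (A \subset cl C (I :\ p)).
  by apply: contra p_cl => /cl_subset/subsetP; apply.
have aI : a \notin I :\ p by apply: contra a_cl; exact/subsetP/subset_cl.
have -> : #|I| = #|a |: (I :\ p)| by rewrite (cardsD1 p I) pI cardsU1 aI.
apply: indep_card_le_rank; last exact: indep_setU1 (indep_subset indI (subD1set _ _)) a_cl.
rewrite subUset sub1set Aa; apply/subsetP => x; rewrite in_setD1 => /andP[xp Ix].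
by move: (subsetP sIpA x Ix); rewrite in_setU1 (negbTE xp).
Qed.

End Elimination.

Section Deletion.
Variable E : finType.
Implicit Types (X Y Z W : sv (option E)) (A I : {set E}).

Lemma in_supp_res X e : (e \in supp (res X)) = (Some e \in supp X).
Proof. by rewrite !inE ffunE. Qed.

Lemma in_zeroset_res X e : (e \in zeroset (res X)) = (Some e \in zeroset X).
Proof. by rewrite !inE ffunE. Qed.

Lemma res_svcomp X Y : res (svcomp X Y) = svcomp (res X) (res Y).
Proof. by apply/ffunP => e; rewrite !ffunE. Qed.

Lemma conformal_res X Y : conformal X Y -> conformal (res X) (res Y).
Proof.
by move=> XY; apply/setP => e; move/setP/(_ (Some e)): XY; rewrite !inE !ffunE.
Qed.

Lemma in_imset_Some A x : (x \in Some @: A) = (if x is Some e then e \in A else false).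
Proof. by case: x => [e|]; [rewrite mem_imset //; exact: Some_inj | apply/imsetP => -[]]. Qed.

Lemma imset_Some_setD1 A e : (Some @: A) :\ Some e = Some @: (A :\ e).
Proof. by apply/setP => -[a|]; rewrite !inE !in_imset_Some ?inE. Qed.

Lemma imset_Some_sub_zeroset A X :
  (Some @: A \subset zeroset X) = (A \subset zeroset (res X)).
Proof.
apply/subsetP/subsetP => sA => [e Ae|x]; first by rewrite in_zeroset_res sA ?imset_f.
by rewrite in_imset_Some; case: x => // e /sA; rewrite in_zeroset_res.
Qed.

Lemma zeroset_Some W : W None != None -> zeroset W = Some @: zeroset (res W).
Proof.
by move=> WN; apply/setP => -[e|]; rewrite in_imset_Some ?in_zeroset_res // inE (negbTE WN).
Qed.

Lemma zeroset_None W : W None = None -> zeroset W = None |: Some @: zeroset (res W).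
Proof.
by move=> WN; apply/setP => -[e|]; rewrite in_setU1 in_imset_Some ?in_zeroset_res // inE WN.
Qed.

Variable C' : {set sv (option E)}.
Hypothesis C'_OM : is_OM C'.

Lemma deletion_cocircuit_sub X0 e : X0 \in C' -> e \in supp (res X0) ->
  exists2 Z, Z \in deletion C' & (supp Z \subset supp (res X0)) && (e \in supp Z).
Proof.
have [n] := ubnP #|supp (res X0)|.
elim: n X0 e => // n IH X0 e size0 C0 e0.
have [del0|] := boolP (res X0 \in deletion C'); first by exists (res X0); rewrite ?subxx.
have nz0 : res X0 != sv0 E by apply: contraTneq e0 => ->; rewrite inE ffunE.
have ex0 : [exists X in C', res X == res X0] by apply/existsP; exists X0; rewrite C0 /=.
rewrite inE nz0 ex0 /= => /forallPn[X2]; rewrite !negb_imply => /and4P[C2 nz2 s20 ns02].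
have smaller X : supp (res X) \proper supp (res X0) -> #|supp (res X)| < n.
  by move=> /proper_card lt; rewrite -ltnS (leq_trans _ size0) ?ltnS.
have [e2|e2] := boolP (e \in supp (res X2)).
  have [|Z delZ /andP[sZ eZ]] := IH X2 e _ C2 e2; first by rewrite smaller // properE s20.
  by exists Z; rewrite // eZ (subset_trans sZ s20).
case/set0Pn: (supp_neq0 nz2) => f f2.
have f0 := subsetP s20 f f2.
move: f2 f0 e0 e2; rewrite !in_supp_res => f2 f0 e0 e2.
have [X3 C3 [f3 e3 s3]] := strong_elimination C'_OM C0 C2 f0 f2 e0 e2.
have s30 : supp (res X3) \subset supp (res X0).
  apply/subsetP => x; rewrite !in_supp_res => /(subsetP s3); rewrite inE => /orP[//|x2].
  by rewrite -in_supp_res (subsetP s20) ?in_supp_res.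
have lt3 : supp (res X3) \proper supp (res X0).
  by apply/properP; split => //; exists f; rewrite in_supp_res.
have [|Z delZ /andP[sZ eZ]] := IH X3 e (smaller _ lt3) C3; first by rewrite in_supp_res.
by exists Z; rewrite // eZ (subset_trans sZ s30).
Qed.

Lemma cl_deletion A e : (Some e \in cl C' (Some @: A)) = (e \in cl (deletion C') A).
Proof.
apply/clP/clP => e_cl.
  move=> Z; rewrite inE => /and3P[_ /existsP[X0 /andP[C0 /eqP <-]] _] sA.
  by rewrite in_zeroset_res e_cl // imset_Some_sub_zeroset.
move=> X0 C0; rewrite imset_Some_sub_zeroset -in_zeroset_res => sA.
rewrite in_zeroset; apply/negP => e0.
have [Z delZ /andP[sZ eZ]] := deletion_cocircuit_sub C0 e0.
suff : e \in zeroset Z by rewrite in_zeroset eZ.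
apply: e_cl => //; apply/subsetP => a Aa; move: (subsetP sA a Aa).
by rewrite !in_zeroset; apply: contra; exact: (subsetP sZ).
Qed.

Lemma indep_deletion I : indep (deletion C') I = indep C' (Some @: I).
Proof.
apply/indepP/indepP => indI => [x /imsetP[e Ie ->]|e Ie].
  by rewrite imset_Some_setD1 cl_deletion indI.
by rewrite -cl_deletion -imset_Some_setD1 indI ?imset_f.
Qed.

Lemma rank_deletion A : rank (deletion C') A = rank C' (Some @: A).
Proof.
apply/eqP; rewrite eqn_leq; apply/andP; split.
  apply/bigmax_leqP => I /andP[sIA indI]; rewrite -(card_imset _ (@Some_inj _)).
  by rewrite indep_card_le_rank ?imsetS // -indep_deletion.
apply/bigmax_leqP => J /andP[sJA indJ].
have J_Some : J = Some @: (Some @^-1: J).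
  apply/setP => -[e|]; first by rewrite in_imset_Some inE.
  by rewrite in_imset_Some; apply/negbTE/negP => /(subsetP sJA); rewrite in_imset_Some.
rewrite J_Some (card_imset _ (@Some_inj _)) indep_card_le_rank ?indep_deletion -?J_Some //.
by apply/subsetP => e; rewrite inE => /(subsetP sJA); rewrite in_imset_Some.
Qed.

End Deletion.

Section Extension.
Variables (E : finType) (C' : {set sv (option E)}).
Hypotheses (C'_OM : is_OM C') (C'_nontrivial : nontrivial_ext C').
Implicit Types (X Y Z W : sv (option E)).

Lemma coloop_of_res_eq0 X : X \in C' -> X None != None -> res X = sv0 E ->
  coloop C' None.
Proof.
move=> CX XN /ffunP rX0; exists X => //; apply/setP => -[e|]; rewrite !inE ?XN //.
by move: (rX0 e); rewrite !ffunE => ->.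
Qed.

Lemma None_in_cl_setT : None \in cl C' (Some @: setT).
Proof.
apply/clP => X CX; rewrite imset_Some_sub_zeroset => sTX.
rewrite inE; apply/negPn/negP => XN; apply/C'_nontrivial/(coloop_of_res_eq0 CX XN).
apply/ffunP => e; rewrite [sv0 E e]ffunE; apply/eqP.
by move: (subsetP sTX e (in_setT e)); rewrite inE.
Qed.

Lemma OMrank_deletion : OMrank (deletion C') = OMrank C'.
Proof.
rewrite /OMrank (rank_deletion C'_OM) -(rank_setU1_cl C'_OM None_in_cl_setT).
congr rank.
by apply/setP => -[e|]; rewrite in_setU1 in_imset_Some !inE.
Qed.

(* A hyperplane of O whose cocircuit of O' vanishes at p spans p: a cocircuit
   of O' nonzero at p and vanishing on that hyperplane would have a support
   strictly containing that of the cocircuit. *)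
Lemma None_in_cl_hyperplane Z : Z \in C' -> res Z \in deletion C' -> Z None = None ->
  None \in cl C' (Some @: zeroset (res Z)).
Proof.
move=> CZ delZ ZN; apply/clP => X CX; rewrite imset_Some_sub_zeroset => sZX.
rewrite inE; apply/negPn/negP => XN.
have [rX0|nzX] := eqVneq (res X) (sv0 E).
  exact/C'_nontrivial/(coloop_of_res_eq0 CX XN).
have sXZ : supp (res X) \subset supp (res Z).
  by apply/subsetP => e; apply: contraLR; rewrite -!in_zeroset; exact: (subsetP sZX).
move: delZ; rewrite inE => /and3P[_ _ /forallP/(_ X)]; rewrite CX nzX sXZ /= => sZX'.
have sZX'' : supp Z \subset supp X.
  apply/subsetP => -[e|]; last by rewrite inE ZN.
  by rewrite -!in_supp_res => /(subsetP sZX').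
by move: (cocircuit_supp_eq C'_OM CZ CX sZX'') => /setP/(_ None); rewrite !inE ZN XN.
Qed.

Lemma res_inj_conformal X Y g : X \in C' -> Y \in C' -> conformal X Y ->
  X (Some g) = Some true -> Y (Some g) = Some true -> res X = res Y -> X = Y.
Proof.
move=> CX CY XY Xg Yg /ffunP rXY.
have eq_Some e : X (Some e) = Y (Some e) by move: (rXY e); rewrite !ffunE.
have eq_if_None U V : U \in C' -> V \in C' -> U None = None ->
    (forall e, U (Some e) = V (Some e)) ->
    U (Some g) = Some true -> V (Some g) = Some true -> U = V.
  move=> CU CV UN UV Ug Vg; have [_ _ incomparable _] := C'_OM.
  have sUV : supp U \subset supp V by apply/subsetP => -[e|]; rewrite !inE ?UN // UV.
  by case: (incomparable _ _ CU CV sUV) => // UV'; move: Ug; rewrite UV' ffunE Vg.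
case XN: (X None) => [b|]; last exact: eq_if_None.
case YN: (Y None) => [c|]; last by symmetry; apply: eq_if_None => // e; rewrite eq_Some.
apply/ffunP => -[e|]; rewrite ?eq_Some // XN YN.
have : None \notin sep X Y by rewrite XY inE.
by rewrite inE XN YN /=; case: b c {XN YN} => -[].
Qed.

Lemma rank_zeroset_res W :
  W None != None \/ None \in cl C' (Some @: zeroset (res W)) ->
  rank (deletion C') (zeroset (res W)) = rank C' (zeroset W).
Proof.
rewrite (rank_deletion C'_OM); case=> [WN|N_cl]; first by rewrite zeroset_Some.
have [WN|WN] := eqVneq (W None) None; last by rewrite zeroset_Some.
by rewrite zeroset_None // (rank_setU1_cl C'_OM N_cl).
Qed.

Lemma principal_cl_zeroset_meet X Y : principal_ext (deletion C') C' ->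
  old_cocircuit (deletion C') C' X -> old_cocircuit (deletion C') C' Y ->
  X None = None -> Y None = None ->
  None \in cl C' (Some @: (zeroset (res X) :&: zeroset (res Y))).
Proof.
case=> A _ principal [CX delX] [CY delY] XN YN.
have flat_hyperplane (Z : sv E) : Z \in deletion C' -> flat (deletion C') (zeroset Z).
  by move=> delZ; rewrite -[zeroset Z]setIid; exact: flat_zerosetI.
have /(principal _ (flat_hyperplane _ delX)) sAX := None_in_cl_hyperplane CX delX XN.
have /(principal _ (flat_hyperplane _ delY)) sAY := None_in_cl_hyperplane CY delY YN.
by apply/(principal _ (flat_zerosetI delX delY)); exact/subsetIP.
Qed.

Lemma edge_res X Y :
  old_cocircuit (deletion C') C' X -> old_cocircuit (deletion C') C' Y ->
  edge C' (svcomp X Y) ->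
  (svcomp X Y None <> None \/ principal_ext (deletion C') C') ->
  edge (deletion C') (svcomp (res X) (res Y)).
Proof.
move=> oldX oldY [_ _ rank_edge] p_or_principal.
have [[_ delX] [_ delY]] := (oldX, oldY).
split.
- by exists [:: res X; res Y]; rewrite /= ?delX ?delY ?svcomp_sv0.
- by rewrite zeroset_svcomp; exact: flat_zerosetI.
rewrite OMrank_deletion -rank_edge -res_svcomp rank_zeroset_res //.
have [WN|/eqP WN] := eqVneq (svcomp X Y None) None; last by left.
case: p_or_principal => // principal; right.
have XN : X None = None by move: WN; rewrite ffunE; case: (X None).
have YN : Y None = None by move: WN; rewrite ffunE XN.
by rewrite res_svcomp zeroset_svcomp principal_cl_zeroset_meet.
Qed.

End Extension.

Theorem proposition3p3 (E : finType) (C : {set sv E})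
    (C' : {set sv (option E)}) (g f : E) (X Y : sv (option E)) :
  program C g f ->
  single_ext C C' -> nontrivial_ext C' ->
  old_cocircuit C C' X -> old_cocircuit C C' Y ->
  conformal X Y -> comodular C' X Y ->
  X (Some g) = Some true -> Y (Some g) = Some true ->
  [/\ res X \in C, res Y \in C, conformal (res X) (res Y),
      res X g = Some true /\ res Y g = Some true &
      (((svcomp X Y) None <> None \/ principal_ext C C') ->
        comodular C (res X) (res Y))].
Proof.
move=> _ [C'_OM <-] nontrivial oldX oldY XY [_ _ X_neq_Y _ edgeXY] Xg Yg.
have [[CX delX] [CY delY]] := (oldX, oldY).
have [rXg rYg] : res X g = Some true /\ res Y g = Some true by rewrite !ffunE.
split=> // [|p_or_principal]; first exact: conformal_res.
split=> //; last exact: edge_res.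
- by move/(res_inj_conformal C'_OM CX CY XY Xg Yg).
- by move/ffunP/(_ g); rewrite [svopp _ _]ffunE rXg rYg.
Qed.
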